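(* For every $f_0>1$, $$\beta(f_0)\le\frac{\pi}{2^{1/2}}+(f_0-1)^{1/2},\qquad\text{where }\ \beta(f_0)=\frac12\int_{\phi_*(f_0)}^{\phi^*(f_0)}\frac{d\phi}{\sqrt{f_0-f(\phi)}}.$$
   Context: Let $f(\phi)=e^\phi-\phi$. For $f_1\ge1$, $\phi_*(f_1)\le0\le\phi^*(f_1)$ denote the two solutions $\phi$ of $f(\phi)=f_1$. *)

From Stdlib Require Import Reals.
From Coquelicot Require Import Coquelicot.
Open Scope R_scope.

Definition fpot (phi : R) : R := exp phi - phi.

Definition beta_integrand (f0 : R) (phi : R) : R := / sqrt (f0 - fpot phi).

From Stdlib Require Import Reals Lra Psatz Classical.
From Coquelicot Require Import Coquelicot.
Open Scope R_scope.

(* Split the integral at 0.  On the right, [fpot phi - phi ^ 2 / 2] is nondecreasing, so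
   [f0 - fpot phi >= (hi ^ 2 - phi ^ 2) / 2] and the integrand is at most
   [sqrt 2 / sqrt (hi ^ 2 - phi ^ 2)], whose integral over [0, hi] is [PI / sqrt 2].
   On the left, the substitution [u = fpot phi] turns [d phi] into [du / (1 - exp phi)],
   and [1 / (1 - exp phi) <= 1 + 1 / sqrt (2 (u - 1))]; integrating [1 / sqrt (f0 - u)] and
   [1 / sqrt (2 (u - 1) (f0 - u))] over [1, f0] gives [2 sqrt (f0 - 1) + PI / sqrt 2].
   Both estimates are carried out in [phi] through explicit primitives, and the improper
   integral exists because the integrand is nonnegative with uniformly bounded integrals
   over compact subintervals. *)

Lemma nondecreasing_of_derive (h h' : R -> R) a b :
  a <= b -> (forall c, a <= c <= b -> is_derive h c (h' c)) ->
  (forall c, a <= c <= b -> 0 <= h' c) -> h a <= h b.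
Proof.
  intros Hab Hd Hp. destruct (Req_dec a b) as [->|Hne]; [lra|].
  destruct (MVT_cor2 h h' a b) as [c [Hc1 Hc2]]; [lra| |].
  - intros c Hc. apply is_derive_Reals. auto.
  - assert (0 <= h' c) by (apply Hp; lra). nra.
Qed.

Lemma ex_RInt_continuous_le (g : R -> R) a b :
  a <= b -> (forall x, a <= x <= b -> continuous g x) -> ex_RInt g a b.
Proof.
  intros Hab Hg. apply (ex_RInt_continuous (V:=R_CompleteNormedModule)). intros x Hx.
  rewrite Rmin_left, Rmax_right in Hx by lra. auto.
Qed.

Lemma RInt_le_antiderivative (g M m : R -> R) lo hi a c :
  lo < a -> a <= c -> c < hi ->
  (forall x, lo < x < hi -> continuous g x) ->
  (forall x, lo < x < hi -> is_derive M x (m x)) ->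
  (forall x, lo < x < hi -> g x <= m x) ->
  RInt g a c <= M c - M a.
Proof.
  intros Ha Hac Hc Hg HM Hle.
  assert (Hint : forall x, lo < x < hi -> is_derive (RInt g a) x (g x)).
  { intros x Hx. apply (is_derive_RInt g (RInt g a) a); [|apply Hg; lra].
    apply (locally_open (fun y => lo < y < hi)).
    - apply open_and; [apply open_gt|apply open_lt].
    - intros y Hy. apply (RInt_correct (V:=R_CompleteNormedModule)).
      destruct (Rle_dec a y).
      + apply ex_RInt_continuous_le; [lra|]. intros; apply Hg; lra.
      + apply ex_RInt_swap, ex_RInt_continuous_le; [lra|]. intros; apply Hg; lra.
    - lra. }
  assert (H := nondecreasing_of_derive (fun x => M x - RInt g a x)
                 (fun x => m x - g x) a c Hac).
  simpl in H. rewrite RInt_point in H. unfold zero in H; simpl in H.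
  enough (M a - 0 <= M c - RInt g a c) by lra.
  apply H.
  - intros x Hx. apply (is_derive_minus M (RInt g a)); [apply HM|apply Hint]; lra.
  - intros x Hx. assert (g x <= m x) by (apply Hle; lra). lra.
Qed.

Lemma le_of_continuous_left (h : R -> R) a b B : a < b -> continuous h b ->
  (forall c, a < c < b -> h c <= B) -> h b <= B.
Proof.
  intros Hab Hc HB. destruct (Rle_dec (h b) B) as [|Hgt]; [auto|exfalso].
  apply filterlim_locally with (eps := mkposreal (h b - B) ltac:(lra)) in Hc.
  destruct Hc as [d Hd].
  set (c := b - Rmin d (b - a) / 2).
  assert (Hmin := Rmin_l d (b - a)). assert (Hmin' := Rmin_r d (b - a)).
  assert (Hpos : 0 < Rmin d (b - a)) by (apply Rmin_pos; [apply cond_pos|lra]).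
  assert (Hcb : a < c < b) by (unfold c; lra).
  assert (Hball : ball b d c).
  { apply Rabs_def1; unfold c, minus, plus, opp; simpl; lra. }
  specialize (Hd c Hball). apply Rabs_def2 in Hd. simpl in Hd.
  unfold minus, plus, opp in Hd; simpl in Hd.
  specialize (HB c Hcb). lra.
Qed.

Lemma RInt_le_of_upper_lt (g : R -> R) a b B : a < b ->
  locally b (fun z => ex_RInt g a z) ->
  (forall c, a < c < b -> RInt g a c <= B) -> RInt g a b <= B.
Proof.
  intros Hab Hex HB. apply (le_of_continuous_left (RInt g a) a); auto.
  apply (continuous_RInt_1 g a b).
  apply (filter_imp _ _ (fun z Hz => RInt_correct (V:=R_CompleteNormedModule) g a z Hz) Hex).
Qed.

Lemma filterlim_monotone_bounded {T : Type} (F : (T -> Prop) -> Prop) {FF : Filter F}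
  (G : T -> R) (P : T -> Prop) B :
  (exists t, P t) -> F P -> (forall t, P t -> G t <= B) ->
  (forall t, P t -> F (fun s => G t <= G s)) ->
  exists l, filterlim G F (locally l) /\ l <= B.
Proof.
  intros [t0 Ht0] HP HB Hmono.
  set (E := fun y => exists t, P t /\ y = G t).
  destruct (completeness E) as [l [Hub Hlub]].
  - exists B. intros y [t [Ht ->]]. auto.
  - exists (G t0), t0. auto.
  - exists l. split.
    2:{ apply Hlub. intros y [t [Ht ->]]. auto. }
    apply filterlim_locally. intros eps.
    assert (Hclose : exists t, P t /\ l - eps < G t).
    { apply NNPP. intros Hn.
      assert (l <= l - eps).
      { apply Hlub. intros y [t [Ht ->]].
        apply Rnot_lt_le. intros Hlt. apply Hn. exists t. auto. }
      destruct eps as [e He]; simpl in *; lra. }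
    destruct Hclose as [t [Ht Hlt]].
    apply (filter_imp (fun s => P s /\ G t <= G s)).
    + intros s [Hs Hts]. apply Rabs_def1.
      * assert (G s <= l) by (apply Hub; exists s; auto).
        unfold minus, plus, opp; simpl. destruct eps; simpl in *; lra.
      * unfold minus, plus, opp; simpl. lra.
    + apply filter_and; auto.
Qed.

Lemma is_RInt_gen_of_filterlim (g : R -> R) Fa Fb l :
  Filter Fa -> Filter Fb ->
  filter_prod Fa Fb (fun ab => ex_RInt g (fst ab) (snd ab)) ->
  filterlim (fun ab => RInt g (fst ab) (snd ab)) (filter_prod Fa Fb) (locally l) ->
  is_RInt_gen g Fa Fb l.
Proof.
  intros FFa FFb Hex Hlim P HP. unfold filtermapi.
  apply (filter_imp (fun ab => ex_RInt g (fst ab) (snd ab) /\ P (RInt g (fst ab) (snd ab)))).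
  - intros ab [Hab HPab]. exists (RInt g (fst ab) (snd ab)). split; auto.
    apply (RInt_correct (V:=R_CompleteNormedModule)). auto.
  - apply filter_and; auto. apply Hlim. auto.
Qed.

Lemma RInt_le_RInt_nonneg (g : R -> R) a' a b b' :
  a' <= a -> a <= b -> b <= b' ->
  (forall x, a' <= x <= b' -> continuous g x) ->
  (forall x, a' <= x <= b' -> 0 <= g x) ->
  RInt g a b <= RInt g a' b'.
Proof.
  intros H1 H2 H3 Hg Hp.
  assert (Hex : forall u v, a' <= u -> u <= v -> v <= b' -> ex_RInt g u v)
    by (intros; apply ex_RInt_continuous_le; [lra|]; intros; apply Hg; lra).
  assert (Hge : forall u v, a' <= u -> u <= v -> v <= b' -> 0 <= RInt g u v)
    by (intros; apply RInt_ge_0; [lra|apply Hex; lra|]; intros; apply Hp; lra).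
  rewrite <- (RInt_Chasles g a' a b'), <- (RInt_Chasles g a b b') by (apply Hex; lra).
  assert (0 <= RInt g a' a) by (apply Hge; lra).
  assert (0 <= RInt g b b') by (apply Hge; lra).
  unfold plus; simpl. lra.
Qed.

Lemma at_right_interval lo a : lo < a -> at_right lo (fun x => lo < x < a).
Proof.
  intros H. apply (locally_open (fun x => x < a)); [apply open_lt| |auto].
  intros x Hx Hlo. auto.
Qed.

Lemma at_left_interval hi b : b < hi -> at_left hi (fun x => b < x < hi).
Proof.
  intros H. apply (locally_open (fun x => b < x)); [apply open_gt| |auto].
  intros x Hx Hhi. auto.
Qed.

Lemma is_RInt_gen_nonneg_bounded (g : R -> R) lo m hi B :
  lo < m < hi ->
  (forall x, lo < x < hi -> continuous g x) ->
  (forall x, lo < x < hi -> 0 <= g x) ->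
  (forall a b, lo < a < m -> m < b < hi -> RInt g a b <= B) ->
  exists I, is_RInt_gen g (at_right lo) (at_left hi) I /\ I <= B.
Proof.
  intros Hm Hg Hp HB.
  set (P := fun ab : R * R => lo < fst ab < m /\ m < snd ab < hi).
  assert (HP : filter_prod (at_right lo) (at_left hi) P).
  { apply (Filter_prod _ _ _ (fun a => lo < a < m) (fun b => m < b < hi));
      [apply at_right_interval; lra|apply at_left_interval; lra|].
    intros a b Ha Hb. unfold P; simpl; auto. }
  destruct (filterlim_monotone_bounded (filter_prod (at_right lo) (at_left hi))
              (fun ab => RInt g (fst ab) (snd ab)) P B) as [I [HI HIB]]; auto.
  - exists ((lo + m) / 2, (m + hi) / 2). unfold P; simpl; lra.
  - intros [a b] [Ha Hb]. simpl in *. apply HB; auto.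
  - intros [a b] [Ha Hb]. simpl in *.
    apply (Filter_prod _ _ _ (fun a' => lo < a' < a) (fun b' => b < b' < hi));
      [apply at_right_interval|apply at_left_interval|]; try lra.
    intros a' b' Ha' Hb'. simpl.
    apply RInt_le_RInt_nonneg; try lra; intros; [apply Hg|apply Hp]; lra.
  - exists I. split; auto. apply is_RInt_gen_of_filterlim; [exact _|exact _| |exact HI].
    refine (filter_imp P _ _ HP). intros [a b] [Ha Hb]. simpl in *.
    apply ex_RInt_continuous_le; [lra|]. intros; apply Hg; lra.
Qed.

Lemma Rinv_sqrt_le u v : 0 < u -> u <= v -> / sqrt v <= / sqrt u.
Proof.
  intros Hu Huv. apply Rinv_le_contravar; [apply sqrt_lt_R0; lra|].
  apply sqrt_le_1_alt, Huv.
Qed.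

Lemma is_derive_asin y : -1 < y < 1 -> is_derive asin y (/ sqrt (1 - y ^ 2)).
Proof.
  intros H. apply is_derive_Reals.
  apply derive_pt_eq_1 with (derivable_pt_asin y H).
  rewrite derive_pt_asin. unfold Rsqr. replace (y ^ 2) with (y * y) by ring. field.
  apply Rgt_not_eq, sqrt_lt_R0. nra.
Qed.

Definition asin_affine (p q u : R) : R := asin ((2 * u - p - q) / (q - p)).

Lemma is_derive_asin_affine p q u : p < u < q ->
  is_derive (asin_affine p q) u (/ sqrt ((u - p) * (q - u))).
Proof.
  intros Hu. set (y := (2 * u - p - q) / (q - p)).
  assert (Hy : -1 < y < 1).
  { unfold y; split; [apply Rmult_lt_reg_r with (q - p)|apply Rmult_lt_reg_r with (q - p)];
      try lra; field_simplify; lra. }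
  assert (Hsq : sqrt (1 - y ^ 2) = 2 / (q - p) * sqrt ((u - p) * (q - u))).
  { replace (1 - y ^ 2) with ((2 / (q - p)) ^ 2 * ((u - p) * (q - u)))
      by (unfold y; field; lra).
    rewrite sqrt_mult_alt, sqrt_pow2; [reflexivity| |apply pow2_ge_0].
    apply Rlt_le, Rdiv_lt_0_compat; lra. }
  assert (Hpos : 0 < sqrt ((u - p) * (q - u))) by (apply sqrt_lt_R0; nra).
  assert (Hin : is_derive (fun v => (2 * v - p - q) / (q - p)) u (2 / (q - p))).
  { auto_derive; [exact I|field; lra]. }
  assert (H := is_derive_comp asin (fun v => (2 * v - p - q) / (q - p)) u _ _
                 (is_derive_asin y Hy) Hin).
  unfold asin_affine. replace (/ sqrt ((u - p) * (q - u)))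
    with (scal (2 / (q - p)) (/ sqrt (1 - y ^ 2))); [exact H|].
  rewrite Hsq. unfold scal; simpl; unfold mult; simpl. field. lra.
Qed.

Lemma exp_le_1 x : x <= 0 -> exp x <= 1.
Proof.
  intros Hx. rewrite <- exp_0. destruct Hx as [Hx| ->]; [|lra].
  apply Rlt_le, exp_increasing, Hx.
Qed.

Lemma is_derive_fpot x : is_derive fpot x (exp x - 1).
Proof. unfold fpot. auto_derive; [exact I|ring]. Qed.

Lemma fpot_0 : fpot 0 = 1.
Proof. unfold fpot. rewrite exp_0. ring. Qed.

Lemma fpot_ge_1 x : 1 <= fpot x.
Proof. unfold fpot. generalize (exp_ineq1_le x). lra. Qed.

Lemma fpot_gt_1 x : x <> 0 -> 1 < fpot x.
Proof. intros H. unfold fpot. generalize (exp_ineq1 x H). lra. Qed.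

Lemma fpot_sub_ge_half_sq x y : x <= y -> (y ^ 2 - x ^ 2) / 2 <= fpot y - fpot x.
Proof.
  intros Hxy.
  enough (fpot x - x ^ 2 / 2 <= fpot y - y ^ 2 / 2) by lra.
  apply (nondecreasing_of_derive (fun t => fpot t - t ^ 2 / 2) (fun t => exp t - 1 - t));
    auto.
  - intros t _. unfold fpot. auto_derive; [exact I|field].
  - intros t _. generalize (exp_ineq1_le t). lra.
Qed.

Lemma fpot_lt_of_nonpos lo x : lo < x <= 0 -> fpot x < fpot lo.
Proof.
  intros Hx. unfold fpot.
  assert (Hchord : exp x * (1 + (lo - x)) < exp lo).
  { replace lo with (x + (lo - x)) at 2 by ring. rewrite exp_plus.
    apply Rmult_lt_compat_l; [apply exp_pos|apply exp_ineq1; lra]. }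
  assert (exp x <= 1) by (apply exp_le_1; lra).
  nra.
Qed.

Lemma exp_sq_fpot_le x : x <= 0 -> 2 * exp x ^ 2 * (fpot x - 1) <= (1 - exp x) ^ 2.
Proof.
  intros Hx.
  (* Divided by [exp x ^ 2] the claim reads [r x >= 0 = r 0], and [r'] factors. *)
  set (r := fun t => (exp (- t) - 1) ^ 2 - 2 * exp t + 2 * t + 2).
  assert (Hinv : forall t, exp (- t) * exp t = 1)
    by (intros t; rewrite <- exp_plus, Rplus_opp_l; apply exp_0).
  assert (Hr : - r x <= - r 0).
  { apply (nondecreasing_of_derive (fun t => - r t)
             (fun t => 2 * (exp (- t) - 1) * (exp (- t) - exp t)) x 0 Hx).
    - intros t _. unfold r. auto_derive; [exact I|].
      assert (H := Hinv t). nra.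
    - intros t Ht. assert (exp t <= 1) by (apply exp_le_1; lra).
      assert (1 <= exp (- t)) by (generalize (exp_ineq1_le (- t)); lra). nra. }
  assert (Hr0 : r 0 = 0) by (unfold r; rewrite Ropp_0, exp_0; ring).
  assert (H := Hinv x). assert (Hpos := exp_pos x).
  unfold r, fpot in *.
  assert (0 <= exp x ^ 2 * ((exp (- x) - 1) ^ 2 - 2 * exp x + 2 * x + 2))
    by (apply Rmult_le_pos; [apply pow2_ge_0|lra]).
  nra.
Qed.

Section BetaBound.

Variables f0 lo hi : R.
Hypotheses (Hlo : lo < 0) (Hhi : 0 < hi) (Hflo : fpot lo = f0) (Hfhi : fpot hi = f0).

Lemma fpot_lt_f0 x : lo < x < hi -> fpot x < f0.
Proof.
  intros Hx. destruct (Rle_dec x 0) as [Hx0|Hx0].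
  - rewrite <- Hflo. apply fpot_lt_of_nonpos. lra.
  - assert (H := fpot_sub_ge_half_sq x hi ltac:(lra)). nra.
Qed.

Lemma beta_integrand_continuous x : lo < x < hi -> continuous (beta_integrand f0) x.
Proof.
  intros Hx. assert (H := fpot_lt_f0 x Hx).
  apply (ex_derive_continuous (K:=R_AbsRing) (V:=R_NormedModule)).
  unfold beta_integrand, fpot in *. auto_derive.
  split; [lra|split; [|exact I]]. apply Rgt_not_eq, sqrt_lt_R0. lra.
Qed.

Lemma beta_integrand_nonneg x : lo < x < hi -> 0 <= beta_integrand f0 x.
Proof.
  intros Hx. apply Rlt_le, Rinv_0_lt_compat, sqrt_lt_R0.
  generalize (fpot_lt_f0 x Hx). lra.
Qed.

Lemma RInt_beta_integrand_right b : 0 < b < hi ->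
  RInt (beta_integrand f0) 0 b <= PI / sqrt 2.
Proof.
  intros Hb.
  assert (Hs2p : 0 < sqrt 2) by (apply sqrt_lt_R0; lra).
  eapply Rle_trans.
  - apply (RInt_le_antiderivative _ (fun x => sqrt 2 * asin_affine (- hi) hi x)
             (fun x => sqrt 2 * / sqrt ((x - - hi) * (hi - x))) (Rmax lo (- hi)) hi).
    + apply Rmax_lub_lt; lra.
    + lra.
    + lra.
    + intros x Hx. apply beta_integrand_continuous.
      assert (Hm := Rmax_l lo (- hi)). lra.
    + intros x Hx. apply (is_derive_scal (asin_affine (- hi) hi)).
      apply is_derive_asin_affine. assert (Hm := Rmax_r lo (- hi)). lra.
    + intros x Hx. assert (Hm := Rmax_l lo (- hi)). assert (Hm' := Rmax_r lo (- hi)).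
      assert (Hgap := fpot_sub_ge_half_sq x hi ltac:(lra)).
      assert (Hu : 0 < (x - - hi) * (hi - x) / 2) by nra.
      unfold beta_integrand.
      replace (sqrt 2 * / sqrt ((x - - hi) * (hi - x)))
        with (/ sqrt ((x - - hi) * (hi - x) / 2)).
      * apply Rinv_sqrt_le; [lra|]. rewrite Hfhi in Hgap. nra.
      * rewrite sqrt_div_alt by lra. field.
        split; apply Rgt_not_eq, sqrt_lt_R0; nra.
  - unfold asin_affine.
    replace ((2 * 0 - - hi - hi) / (hi - - hi)) with 0 by (field; lra).
    rewrite asin_0. assert (H := asin_bound ((2 * b - - hi - hi) / (hi - - hi))).
    replace (PI / sqrt 2) with (sqrt 2 * (PI / 2))
      by (field_simplify_eq; [rewrite pow2_sqrt by lra; ring|lra]).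
    nra.
Qed.

Lemma beta_integrand_le_left_majorant x : lo < x < 0 ->
  beta_integrand f0 x <=
  (1 - exp x) * (/ sqrt (f0 - fpot x) + / sqrt 2 * / sqrt ((fpot x - 1) * (f0 - fpot x))).
Proof.
  intros Hx.
  assert (HD : 0 < f0 - fpot x) by (generalize (fpot_lt_f0 x ltac:(lra)); lra).
  assert (HE : 0 < fpot x - 1) by (apply Rlt_0_minus, fpot_gt_1; lra).
  assert (He : 0 < exp x < 1)
    by (split; [apply exp_pos|rewrite <- exp_0; apply exp_increasing; lra]).
  set (d := sqrt (f0 - fpot x)). set (s := sqrt (2 * (fpot x - 1))).
  assert (Hd : 0 < d) by (apply sqrt_lt_R0; lra).
  assert (Hs : 0 < s) by (apply sqrt_lt_R0; lra).
  assert (Hkey : exp x * s <= 1 - exp x).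
  { assert (H := exp_sq_fpot_le x ltac:(lra)).
    assert (Hle : sqrt (exp x ^ 2 * (2 * (fpot x - 1))) <= sqrt ((1 - exp x) ^ 2))
      by (apply sqrt_le_1_alt; lra).
    rewrite sqrt_mult_alt, !sqrt_pow2 in Hle by (try apply pow2_ge_0; lra).
    exact Hle. }
  replace (/ sqrt 2 * / sqrt ((fpot x - 1) * (f0 - fpot x))) with (/ (s * d)).
  2:{ unfold s, d. rewrite <- sqrt_mult_alt, Rmult_assoc by lra.
      rewrite (sqrt_mult_alt 2) by lra. field.
      split; apply Rgt_not_eq, sqrt_lt_R0; nra. }
  unfold beta_integrand. fold d.
  apply Rmult_le_reg_r with (s * d); [nra|].
  field_simplify; [|lra|lra]. nra.
Qed.

Lemma RInt_beta_integrand_left a c : lo < a -> a <= c -> c < 0 ->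
  RInt (beta_integrand f0) a c <= PI / sqrt 2 + 2 * sqrt (f0 - 1).
Proof.
  intros Ha Hac Hc.
  eapply Rle_trans.
  - apply (RInt_le_antiderivative _
             (fun x => 2 * sqrt (f0 - fpot x) - / sqrt 2 * asin_affine 1 f0 (fpot x))
             (fun x => (1 - exp x) * (/ sqrt (f0 - fpot x)
                         + / sqrt 2 * / sqrt ((fpot x - 1) * (f0 - fpot x)))) lo 0);
      auto.
    + intros x Hx. apply beta_integrand_continuous. lra.
    + intros x Hx.
      assert (HD : 0 < f0 - fpot x) by (generalize (fpot_lt_f0 x ltac:(lra)); lra).
      assert (HE : 1 < fpot x) by (apply fpot_gt_1; lra).
      assert (Hsqrt : is_derive (fun x => 2 * sqrt (f0 - fpot x)) x
                        ((1 - exp x) * / sqrt (f0 - fpot x))).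
      { unfold fpot in *. auto_derive; [lra|].
        replace (f0 + - (exp x + - x)) with (f0 - (exp x - x)) by ring. field.
        apply Rgt_not_eq, sqrt_lt_R0; lra. }
      assert (Hasin := is_derive_comp (asin_affine 1 f0) fpot x _ _
                         (is_derive_asin_affine 1 f0 (fpot x) ltac:(lra)) (is_derive_fpot x)).
      assert (H := is_derive_minus _ _ x _ _ Hsqrt (is_derive_scal _ x (/ sqrt 2) _ Hasin)).
      simpl in H. unfold scal, minus, plus, opp in H; simpl in H; unfold mult in H; simpl in H.
      match type of H with is_derive _ _ ?l =>
        replace ((1 - exp x) * _) with l; [exact H|ring] end.
    + intros x Hx. apply beta_integrand_le_left_majorant. lra.
  - assert (Hsc : sqrt (f0 - fpot c) <= sqrt (f0 - 1))
      by (apply sqrt_le_1_alt; generalize (fpot_ge_1 c); lra).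
    assert (Hsa := sqrt_pos (f0 - fpot a)).
    assert (Hasin : / sqrt 2 * (asin_affine 1 f0 (fpot a) - asin_affine 1 f0 (fpot c))
                    <= / sqrt 2 * PI).
    { apply Rmult_le_compat_l; [apply Rlt_le, Rinv_0_lt_compat, sqrt_lt_R0; lra|].
      unfold asin_affine. generalize (asin_bound ((2 * fpot a - 1 - f0) / (f0 - 1)))
        (asin_bound ((2 * fpot c - 1 - f0) / (f0 - 1))). lra. }
    unfold Rdiv. lra.
Qed.

Lemma ex_RInt_beta_integrand a b : lo < a -> a <= b -> b < hi ->
  ex_RInt (beta_integrand f0) a b.
Proof.
  intros Ha Hab Hb. apply ex_RInt_continuous_le; auto.
  intros x Hx. apply beta_integrand_continuous. lra.
Qed.

Lemma beta_integral_bound : exists I,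
  is_RInt_gen (beta_integrand f0) (at_right lo) (at_left hi) I /\
  I <= 2 * (PI / sqrt 2) + 2 * sqrt (f0 - 1).
Proof.
  apply (is_RInt_gen_nonneg_bounded _ lo 0 hi); auto.
  - apply beta_integrand_continuous.
  - apply beta_integrand_nonneg.
  - intros a b Ha Hb.
    (* The left primitive is not differentiable at 0, so the bound up to 0 is a limit. *)
    assert (Hleft : RInt (beta_integrand f0) a 0 <= PI / sqrt 2 + 2 * sqrt (f0 - 1)).
    { apply RInt_le_of_upper_lt; [lra| |].
      - apply (locally_open (fun z => a < z < hi)); [|intros z Hz| lra].
        + apply open_and; [apply open_gt|apply open_lt].
        + apply ex_RInt_beta_integrand; lra.
      - intros c Hc. apply RInt_beta_integrand_left; lra. }
    assert (Hright := RInt_beta_integrand_right b Hb).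
    rewrite <- (RInt_Chasles _ a 0 b) by (apply ex_RInt_beta_integrand; lra).
    unfold plus; simpl. lra.
Qed.

End BetaBound.

Theorem corollary2p5 :
  forall f0 lo hi : R,
    1 < f0 ->
    lo <= 0 -> 0 <= hi -> fpot lo = f0 -> fpot hi = f0 ->
    exists I : R,
      is_RInt_gen (beta_integrand f0) (at_right lo) (at_left hi) I /\
      / 2 * I <= PI / sqrt 2 + sqrt (f0 - 1).
Proof.
  intros f0 lo hi Hf0 Hlo Hhi Hflo Hfhi.
  assert (Hlo' : lo < 0) by (destruct Hlo as [| ->]; [auto|rewrite fpot_0 in Hflo; lra]).
  assert (Hhi' : 0 < hi) by (destruct Hhi as [| <-]; [auto|rewrite fpot_0 in Hfhi; lra]).
  destruct (beta_integral_bound f0 lo hi Hlo' Hhi' Hflo Hfhi) as [I [HI HIB]].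
  exists I. split; [exact HI|lra].
Qed.
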